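(* Let $S$ be a numerical semigroup with $\mathrm{m}(S)\geq 2$. If $S$ is a MANS-semigroup, then there exists $a\in\mathbb{N}\setminus\{0\}$ such that $\mathrm{r}(S)=a\,\mathrm{m}(S)+1$.
   Context: $\mathbb{N}=\{0,1,2,\ldots\}$. A numerical semigroup is a subset $S\subseteq\mathbb{N}$ closed under addition, containing $0$, with $\mathbb{N}\setminus S$ finite; it has a unique finite minimal system of generators $\mathrm{msg}(S)=\{n_1<n_2<\cdots<n_e\}$, and $\mathrm{m}(S)=n_1$ (multiplicity, the least element of $S\setminus\{0\}$), $\mathrm{r}(S)=n_2$ (ratio). $S$ is a MANS-semigroup if $w(1)<w(2)<\cdots<w(\mathrm{m}(S)-1)$, where $w(i)$ is the least element of $S$ congruent to $i$ modulo $\mathrm{m}(S)$. *)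

From mathcomp Require Import all_boot.
Set Implicit Arguments. Unset Strict Implicit. Unset Printing Implicit Defensive.

Definition numerical_semigroup (S : nat -> Prop) : Prop :=
  S 0 /\ (forall x y, S x -> S y -> S (x + y)) /\
  (exists F, forall n, F <= n -> S n).

Definition min_gen (S : nat -> Prop) (n : nat) : Prop :=
  S n /\ 0 < n /\ ~ (exists x y, S x /\ S y /\ 0 < x /\ 0 < y /\ n = x + y).

Definition is_multiplicity (S : nat -> Prop) (m : nat) : Prop :=
  S m /\ 0 < m /\ forall x, S x -> 0 < x -> m <= x.

Definition is_ratio (S : nat -> Prop) (r : nat) : Prop :=
  exists m, is_multiplicity S m /\ min_gen S r /\ m < r /\
    forall g, min_gen S g -> m < g -> r <= g.

Definition is_apery_min (S : nat -> Prop) (m i w : nat) : Prop :=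
  S w /\ w = i %[mod m] /\ forall x, S x -> x = i %[mod m] -> w <= x.

Definition MANS (S : nat -> Prop) : Prop :=
  exists m, is_multiplicity S m /\
    forall i j wi wj, 1 <= i -> i < j -> j <= m - 1 ->
      is_apery_min S m i wi -> is_apery_min S m j wj -> wi < wj.

From mathcomp Require Import all_boot.
From mathcomp Require Import zify.
From Stdlib Require Import Classical.

Set Implicit Arguments.
Unset Strict Implicit.

(* Every nonzero element of S below the ratio r is a sum of minimal generators
   smaller than r, i.e. of copies of m; hence every element of S that is not a
   multiple of m is at least r.  Since m does not divide r, r is the Apery
   minimum w(r mod m), while w(1) is not a multiple of m, so r <= w(1).  The
   MANS condition w(1) < w(i) for i > 1 then forces r mod m = 1. *)

Lemma is_multiplicity_uniq (S : nat -> Prop) (m m' : nat) :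
  is_multiplicity S m -> is_multiplicity S m' -> m = m'.
Proof.
move=> [Sm [m_gt0 m_min]] [Sm' [m'_gt0 m'_min]].
by apply/eqP; rewrite eqn_leq m_min ?m'_min.
Qed.

Lemma classic_ex_min (P : nat -> Prop) (n : nat) :
  P n -> exists k, P k /\ forall j, P j -> k <= j.
Proof.
elim/ltn_ind: n => n IHn Pn.
case: (classic (exists2 j, P j & j < n)) => [[j Pj lt_jn] | no_smaller].
  exact: IHn Pj.
exists n; split=> // j Pj; rewrite leqNgt; apply/negP => lt_jn.
by apply: no_smaller; exists j.
Qed.

Lemma not_min_gen_split (S : nat -> Prop) (x : nat) :
  S x -> 0 < x -> ~ min_gen S x ->
  exists y z, S y /\ S z /\ 0 < y /\ 0 < z /\ x = y + z.
Proof. by move=> Sx x_gt0 not_gen; apply: NNPP => no_split; apply: not_gen. Qed.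

Section NumericalSemigroup.

Variable S : nat -> Prop.
Hypothesis S0 : S 0.
Hypothesis SD : forall x y, S x -> S y -> S (x + y).
Variable m : nat.
Hypothesis multS : is_multiplicity S m.

Lemma S_mull (k x : nat) : S x -> S (k * x).
Proof. by move=> Sx; elim: k => [|k IHk]; rewrite ?mul0n // mulSn; apply: SD. Qed.

Lemma dvdn_below_ratio (r x : nat) :
  is_ratio S r -> S x -> 0 < x -> x < r -> m %| x.
Proof.
move=> [m' [multS' [_ [_ r_min]]]]; rewrite -(is_multiplicity_uniq multS multS') in r_min.
have [_ [_ m_min]] := multS.
elim/ltn_ind: x => x IHx Sx x_gt0 lt_xr.
case: (classic (min_gen S x)) => [gen_x | not_gen].
  case: (leqP x m) => [le_xm | lt_mx]; last by have := r_min _ gen_x lt_mx; lia.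
  by have -> : x = m by apply/eqP; rewrite eqn_leq le_xm m_min.
have [y [z [Sy [Sz [y_gt0 [z_gt0 x_eq]]]]]] := not_min_gen_split Sx x_gt0 not_gen.
by rewrite x_eq; apply: dvdn_add; apply: IHx => //; lia.
Qed.

Lemma ratio_gt_multiplicity (r : nat) : is_ratio S r -> m < r.
Proof. by move=> [m' [multS' [_ [lt_m'r _]]]]; rewrite (is_multiplicity_uniq multS multS'). Qed.

Lemma ratio_le_ndvdn (r x : nat) : is_ratio S r -> S x -> ~~ (m %| x) -> r <= x.
Proof.
move=> ratio_r Sx ndvd_x; rewrite leqNgt; apply/negP => lt_xr.
case: (posnP x) => [x0 | x_gt0]; first by rewrite x0 dvdn0 in ndvd_x.
by rewrite (dvdn_below_ratio ratio_r Sx x_gt0 lt_xr) in ndvd_x.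
Qed.

Lemma ratio_ndvdn (r : nat) : is_ratio S r -> ~~ (m %| r).
Proof.
move=> ratio_r; have [_ [_ [[_ [_ r_indec]] _]]] := ratio_r.
have lt_mr := ratio_gt_multiplicity ratio_r; have [Sm [m_gt0 _]] := multS.
apply/negP => /dvdnP [k r_eq]; apply: r_indec.
exists m, (r - m); split=> //; split; last by lia.
have -> : r - m = k.-1 * m by rewrite r_eq -subn1 mulnBl mul1n.
exact: S_mull.
Qed.

Lemma apery_min_ratio (r : nat) : is_ratio S r -> is_apery_min S m (r %% m) r.
Proof.
move=> ratio_r; have [m' [_ [[Sr _] _]]] := ratio_r.
split=> //; split=> [|x Sx x_eq]; first by rewrite modn_mod.
apply: ratio_le_ndvdn => //; move: (ratio_ndvdn ratio_r).
by rewrite /dvdn x_eq modn_mod.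
Qed.

Lemma apery_min_exists (i : nat) :
  (exists F, forall n, F <= n -> S n) -> exists w, is_apery_min S m i w.
Proof.
move=> [F cofin]; have [_ [m_gt0 _]] := multS.
have [w [[Sw w_eq] w_min]] :
    exists w, (S w /\ w = i %[mod m]) /\
              forall x, S x /\ x = i %[mod m] -> w <= x.
  apply: (@classic_ex_min _ (F * m + i)); split; last by rewrite modnMDl.
  by apply: cofin; nia.
by exists w; split=> //; split=> // x Sx x_eq; apply: w_min.
Qed.

End NumericalSemigroup.

Theorem lemma2p2 (S : nat -> Prop) (m r : nat) :
  numerical_semigroup S -> is_multiplicity S m -> 2 <= m ->
  is_ratio S r -> MANS S ->
  exists a, 0 < a /\ r = a * m + 1.
Proof.
move=> [S0 [SD cofin]] multS m_ge2 ratio_r [m' [multS' mans]].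
rewrite -(is_multiplicity_uniq multS multS') in mans.
have [w1 apery_w1] := apery_min_exists multS 1 cofin.
have le_r_w1 : r <= w1.
  apply: (ratio_le_ndvdn multS ratio_r); first by case: apery_w1.
  by have [_ [w1_eq _]] := apery_w1; rewrite /dvdn w1_eq modn_small.
have m_gt0 : 0 < m by lia.
have rm_neq0 : r %% m != 0 by have := ratio_ndvdn S0 SD multS ratio_r.
have rm_lt : r %% m < m by rewrite ltn_mod.
have rm_eq1 : r %% m = 1.
  case: (ltngtP (r %% m) 1) => [|gt_rm1|] //; first by lia.
  have apery_r := apery_min_ratio S0 SD multS ratio_r.
  have := mans _ _ _ _ (leqnn 1) gt_rm1 _ apery_w1 apery_r; lia.
exists (r %/ m); split; last by rewrite {1}(divn_eq r m) rm_eq1.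
by rewrite divn_gt0 // ltnW // (ratio_gt_multiplicity multS ratio_r).
Qed.
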